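(* Let $(X,d)$ be a complete metric space, $N\in\mathbb{N}\setminus\{0\}$, $\alpha:(X\times X)\times(X\times X)\rightarrow[0,+\infty)$ an $N$--transitive mapping on $X\times X$, and $F:X\times X\rightarrow X$ such that for every $\varepsilon>0$ there exists $\delta(\varepsilon)>0$ for which, for all $(x,y),(u,v)\in X\times X$, \[ \varepsilon\leq\tfrac{d(x,u)+d(y,v)}{2}<\varepsilon+\delta(\varepsilon)\Rightarrow\alpha((x,y),(u,v))\,d(F(x,y),F(u,v))<\varepsilon. \] Suppose that: (B1) for all $(x,y),(u,v)\in X\times X$, $\alpha((x,y),(u,v))\geq1$ implies $\alpha((F(x,y),F(y,x)),(F(u,v),F(v,u)))\geq1$; (B2) there exists $(x_{0},y_{0})\in X\times X$ such that $\alpha((x_{0},y_{0}),(F(x_{0},y_{0}),F(y_{0},x_{0})))\geq1$ and $\alpha((F(y_{0},x_{0}),F(x_{0},y_{0})),(y_{0},x_{0}))\geq1$; and at least one of: (B3) $F$ is continuous; or (B4) for every sequence $\{(x_{n},y_{n})\}$ in $X\times X$ with $x_{n}\rightarrow x$, $y_{n}\rightarrow y$ and $\alpha((x_{n},y_{n}),(x_{n+1},y_{n+1}))\geq1$, $\alpha((y_{n+1},x_{n+1}),(y_{n},x_{n}))\geq1$ for all $n$, there is a subsequence with $\alpha((x_{n(k)},y_{n(k)}),(x,y))\geq1$ and $\alpha((y,x),(y_{n(k)},x_{n(k)}))\geq1$ for all $k$. Assume further (B5): $X\times X$ is $\beta$--connected, where $\beta((x,y),(u,v))=\min\{\alpha((x,y),(u,v)),\alpha((v,u),(y,x))\}$.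 Then $F$ has a unique coupled fixed point, this coupled fixed point is of the form $(x^{\ast},x^{\ast})$, $x^{\ast}$ is the unique fixed point of $F$ (i.e., the unique $x$ with $F(x,x)=x$), and $F^{n}(x,y)\rightarrow x^{\ast}$ as $n\rightarrow\infty$ for all $x,y\in X$.
   Context: $\mathbb{N}$ is the set of non-negative integers. For a set $Z$ and $\gamma:Z\times Z\rightarrow[0,+\infty)$, $\gamma$ is $N$--transitive if for all $z_0,\dots,z_{N+1}\in Z$ with $\gamma(z_i,z_{i+1})\geq1$ for all $i\in\{0,\dots,N\}$ one has $\gamma(z_0,z_{N+1})\geq1$. A $\gamma$--chain from $z$ to $w$ is a tuple $(z_0,\dots,z_n)$ with $z_0=z$, $z_n=w$ and, for each $i$, $\gamma(z_{i-1},z_i)\geq1$ or $\gamma(z_i,z_{i-1})\geq1$; $Z$ is $\gamma$--connected if for all $z\neq w$ in $Z$ there is a $\gamma$--chain from $z$ to $w$. A coupled fixed point of $F$ is $(x,y)$ with $F(x,y)=x$, $F(y,x)=y$. Iterates of $F$: for $G,H:X\times X\to X$ define the symmetric composition $(G\ast H)(x,y)=G(H(x,y),H(y,x))$; set $F^{0}(x,y)=x$ and $F^{n+1}=F\ast F^{n}$. *)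

From Stdlib Require Import Reals.
Open Scope R_scope.

Definition is_metric {X : Type} (d : X -> X -> R) : Prop :=
  (forall x y, 0 <= d x y) /\
  (forall x y, d x y = 0 <-> x = y) /\
  (forall x y, d x y = d y x) /\
  (forall x y z, d x z <= d x y + d y z).

Definition converges {X : Type} (d : X -> X -> R) (s : nat -> X) (l : X) : Prop :=
  forall eps, 0 < eps -> exists N, forall n, (N <= n)%nat -> d (s n) l < eps.

Definition cauchy {X : Type} (d : X -> X -> R) (s : nat -> X) : Prop :=
  forall eps, 0 < eps -> exists N, forall m n, (N <= m)%nat -> (N <= n)%nat ->
    d (s m) (s n) < eps.

Definition complete {X : Type} (d : X -> X -> R) : Prop :=
  forall s, cauchy d s -> exists l, converges d s l.

Definition N_transitive {Z : Type} (N : nat) (g : Z -> Z -> R) : Prop :=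
  forall z : nat -> Z,
    (forall i, (i <= N)%nat -> 1 <= g (z i) (z (S i))) ->
    1 <= g (z 0%nat) (z (S N)).

Definition gamma_chain {Z : Type} (g : Z -> Z -> R) (z w : Z) : Prop :=
  exists (n : nat) (c : nat -> Z),
    c 0%nat = z /\ c n = w /\
    forall i, (i < n)%nat -> 1 <= g (c i) (c (S i)) \/ 1 <= g (c (S i)) (c i).

Definition gamma_connected {Z : Type} (g : Z -> Z -> R) : Prop :=
  forall z w : Z, z <> w -> gamma_chain g z w.

(* iterates: F^0(x,y) = x, F^{n+1} = F * F^n, (G*H)(x,y) = G(H(x,y),H(y,x)) *)
Fixpoint Fiter {X : Type} (F : X -> X -> X) (n : nat) : X -> X -> X :=
  match n with
  | O => fun x _ => x
  | S m => fun x y => F (Fiter F m x y) (Fiter F m y x)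
  end.

Definition continuous2 {X : Type} (d : X -> X -> R) (F : X -> X -> X) : Prop :=
  forall x y eps, 0 < eps -> exists delta, 0 < delta /\
    forall u v, d x u + d y v < delta -> d (F x y) (F u v) < eps.

From Stdlib Require Import Reals Lra Lia Classical Relations.
Open Scope R_scope.

(** Work with the map [T (x, y) = (F (x, y), F (y, x))] on [X * X], the metric
    [rho ((x, y), (u, v)) = (d x u + d y v) / 2] and the relation [P p q] saying
    that [alpha p q >= 1] and [alpha] of the swapped, reversed pair is [>= 1].
    Then [T] preserves [P] and satisfies the Meir-Keeler condition on
    [P]-related pairs, so it does not expand their distance and the distance of
    their orbits tends to [0].  Along the orbit of the point of (B2) the points
    [z n] and [z (n + 1 + k N)] are [P]-related by [N]-transitivity, which is
    what the classical Meir-Keeler argument needs to show that this orbit is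
    Cauchy; its limit is a fixed point of [T] by (B3) or (B4).  By (B5) every
    point is linked to this fixed point by a chain of [P]-related pairs, so every
    orbit converges to it.  Hence it is the only fixed point of [T]; being equal
    to its own swap, it has the form [(x, x)]. *)

Definition asymptotic {Z : Type} (r : Z -> Z -> R) (s t : nat -> Z) : Prop :=
  forall eps, 0 < eps -> exists n0, forall n, (n0 <= n)%nat -> r (s n) (t n) < eps.

Definition meir_keeler_on {Z : Type} (r : Z -> Z -> R) (T : Z -> Z)
    (P : Z -> Z -> Prop) : Prop :=
  forall eps, 0 < eps -> exists delta, 0 < delta /\
    forall p q, P p q -> eps <= r p q < eps + delta -> r (T p) (T q) < eps.

Definition rel_N_transitive {Z : Type} (N : nat) (P : Z -> Z -> Prop) : Prop :=
  forall z : nat -> Z,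
    (forall i, (i <= N)%nat -> P (z i) (z (S i))) -> P (z 0%nat) (z (S N)).

Lemma strictly_increasing_ge (nk : nat -> nat) :
  (forall k, (nk k < nk (S k))%nat) -> forall k, (k <= nk k)%nat.
Proof. intros Hnk k; induction k as [|k IH]; [lia|]. specialize (Hnk k); lia. Qed.

Lemma nat_split_mod (n0 p N : nat) : (0 < N)%nat -> (n0 < p)%nat ->
  exists q j, (j < N)%nat /\ p = (n0 + 1 + q * N + j)%nat.
Proof.
  intros HN Hp. exists ((p - n0 - 1) / N)%nat, ((p - n0 - 1) mod N)%nat.
  pose proof (Nat.div_mod_eq (p - n0 - 1) N).
  pose proof (Nat.mod_upper_bound (p - n0 - 1) N ltac:(lia)). lia.
Qed.

Lemma related_along_steps {Z : Type} (P : Z -> Z -> Prop) (N : nat) (s : nat -> Z) :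
  rel_N_transitive N P -> (forall n, P (s n) (s (S n))) ->
  forall n k, P (s n) (s (n + 1 + k * N)%nat).
Proof.
  intros Htr Hsteps n k; induction k as [|k IH].
  - replace (n + 1 + 0 * N)%nat with (S n) by lia. apply Hsteps.
  - replace (n + 1 + S k * N)%nat with (n + 1 + k * N + N)%nat by lia.
    apply (Htr (fun i => match i with O => s n | S j => s (n + 1 + k * N + j)%nat end)).
    assert (Hstep : forall a b, b = S a -> P (s a) (s b)) by (intros; subst; apply Hsteps).
    intros [|i] _; [rewrite Nat.add_0_r; exact IH | apply Hstep; lia].
Qed.

Section Metric.

Variables (Z : Type) (r : Z -> Z -> R).
Hypothesis Hr : is_metric r.

Lemma dist_ge0 x y : 0 <= r x y.
Proof. apply Hr. Qed.

Lemma dist_xx x : r x x = 0.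
Proof. apply Hr; reflexivity. Qed.

Lemma dist_sym x y : r x y = r y x.
Proof. apply Hr. Qed.

Lemma dist_triangle x y z : r x z <= r x y + r y z.
Proof. apply Hr. Qed.

Lemma eq_of_dist_small x y : (forall eps, 0 < eps -> r x y < eps) -> x = y.
Proof.
  intros Hsmall. apply Hr. pose proof (dist_ge0 x y).
  destruct (Rle_lt_dec (r x y) 0) as [?|Hpos]; [lra|].
  specialize (Hsmall _ Hpos); lra.
Qed.

Lemma asymptotic_refl s : asymptotic r s s.
Proof. intros eps Heps; exists 0%nat; intros n _; rewrite dist_xx; exact Heps. Qed.

Lemma asymptotic_sym s t : asymptotic r s t -> asymptotic r t s.
Proof.
  intros Hst eps Heps. destruct (Hst eps Heps) as [n0 Hn0].
  exists n0; intros n Hn; rewrite dist_sym; auto.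
Qed.

Lemma asymptotic_trans s t u :
  asymptotic r s t -> asymptotic r t u -> asymptotic r s u.
Proof.
  intros Hst Htu eps Heps.
  destruct (Hst (eps / 2)) as [n1 Hn1]; [lra|].
  destruct (Htu (eps / 2)) as [n2 Hn2]; [lra|].
  exists (n1 + n2)%nat; intros n Hn.
  specialize (Hn1 n ltac:(lia)); specialize (Hn2 n ltac:(lia)).
  pose proof (dist_triangle (s n) (t n) (u n)); lra.
Qed.

(* [converges r s l] is convertible to [asymptotic r s (fun _ => l)]. *)
Lemma converges_unique s a b : converges r s a -> converges r s b -> a = b.
Proof.
  intros Ha Hb. apply eq_of_dist_small; intros eps Heps.
  destruct (asymptotic_trans _ s _ (asymptotic_sym s (fun _ => a) Ha) Hb eps Heps)
    as [n0 Hn0].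
  exact (Hn0 n0 (le_n _)).
Qed.

Lemma converges_subseq s l (nk : nat -> nat) :
  (forall k, (k <= nk k)%nat) -> converges r s l -> converges r (fun k => s (nk k)) l.
Proof.
  intros Hnk Hl eps Heps. destruct (Hl eps Heps) as [n0 Hn0].
  exists n0; intros k Hk; apply Hn0; specialize (Hnk k); lia.
Qed.

Lemma dist_path_le (s : nat -> Z) (a : nat) (eta : R) :
  (forall i, (a <= i)%nat -> r (s i) (s (S i)) <= eta) ->
  forall j, r (s a) (s (a + j)%nat) <= INR j * eta.
Proof.
  intros Hstep j; induction j as [|j IH].
  - rewrite Nat.add_0_r, dist_xx; simpl; lra.
  - rewrite S_INR, Nat.add_succ_r.
    pose proof (dist_triangle (s a) (s (a + j)%nat) (s (S (a + j)))).
    pose proof (Hstep (a + j)%nat ltac:(lia)); lra.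
Qed.

End Metric.

Section MeirKeeler.

Variables (Z : Type) (r : Z -> Z -> R) (T : Z -> Z) (P : Z -> Z -> Prop).
Hypothesis Hr : is_metric r.
Hypothesis HPT : forall p q, P p q -> P (T p) (T q).
Hypothesis Hmk : meir_keeler_on r T P.

Lemma iter_fixed n l : T l = l -> Nat.iter n T l = l.
Proof. intros Hl; induction n; simpl; congruence. Qed.

Lemma iter_related n p q : P p q -> P (Nat.iter n T p) (Nat.iter n T q).
Proof. intros Hpq; induction n; simpl; auto. Qed.

Lemma dist_map_le p q : P p q -> r (T p) (T q) <= r p q.
Proof.
  intros Hpq. destruct (Rle_lt_dec (r p q) 0) as [Hle|Hpos].
  - assert (p = q) as <- by (apply Hr; pose proof (dist_ge0 _ _ Hr p q); lra).
    rewrite !(dist_xx _ _ Hr); lra.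
  - destruct (Hmk _ Hpos) as [delta [Hdelta Hstep]].
    left; apply Hstep; [exact Hpq | lra].
Qed.

Lemma dist_iter_le n p q : P p q -> r (Nat.iter n T p) (Nat.iter n T q) <= r p q.
Proof.
  intros Hpq; induction n as [|n IH]; simpl; [lra|].
  eapply Rle_trans; [apply dist_map_le, iter_related|]; auto.
Qed.

Lemma meir_keeler_below eps : 0 < eps -> exists delta, 0 < delta /\
  forall p q, P p q -> r p q < eps + delta -> r (T p) (T q) < eps.
Proof.
  intros Heps. destruct (Hmk _ Heps) as [delta [Hdelta Hstep]].
  exists delta; split; [exact Hdelta|]. intros p q Hpq Hlt.
  destruct (Rlt_le_dec (r p q) eps).
  - eapply Rle_lt_trans; [apply dist_map_le|]; eauto.
  - apply Hstep; [exact Hpq | lra].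
Qed.

(* The distances of the orbits decrease; a positive limit [l] would violate the
   Meir-Keeler condition at [l]. *)
Lemma orbits_asymptotic p q :
  P p q -> asymptotic r (fun n => Nat.iter n T p) (fun n => Nat.iter n T q).
Proof.
  intros Hpq.
  set (a := fun n => r (Nat.iter n T p) (Nat.iter n T q)).
  assert (Hdec : Un_decreasing a).
  { intros n; apply dist_map_le, iter_related, Hpq. }
  destruct (decreasing_cv a Hdec) as [l Hl].
  { exists 0; intros x [n ->]; unfold opp_seq, a.
    pose proof (dist_ge0 _ _ Hr (Nat.iter n T p) (Nat.iter n T q)); lra. }
  pose proof (decreasing_ineq a l Hdec Hl) as Hge.
  assert (Hl0 : l <= 0).
  { destruct (Rle_lt_dec l 0) as [?|Hpos]; [assumption|exfalso].
    destruct (Hmk l Hpos) as [delta [Hdelta Hstep]].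
    destruct (Hl delta Hdelta) as [n Hn]. specialize (Hn n (le_n _)).
    unfold Rdist in Hn; apply Rabs_def2 in Hn.
    assert (a (S n) < l).
    { apply (Hstep (Nat.iter n T p) (Nat.iter n T q));
        [apply iter_related, Hpq | specialize (Hge n); unfold a in *; lra]. }
    specialize (Hge (S n)); lra. }
  intros eps Heps. destruct (Hl eps Heps) as [n0 Hn0]. exists n0; intros n Hn.
  specialize (Hn0 n Hn). unfold Rdist in Hn0; apply Rabs_def2 in Hn0.
  unfold a in Hn0; lra.
Qed.

Lemma orbits_asymptotic_rst p q : clos_refl_sym_trans Z P p q ->
  asymptotic r (fun n => Nat.iter n T p) (fun n => Nat.iter n T q).
Proof.
  induction 1.
  - apply orbits_asymptotic; assumption.
  - apply (asymptotic_refl _ _ Hr).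
  - apply asymptotic_sym; assumption.
  - eapply asymptotic_trans; eassumption.
Qed.

Lemma orbit_jumps_near z0 N n0 eps delta eta : (0 < N)%nat -> 0 < eps ->
  (forall k, P (Nat.iter n0 T z0) (Nat.iter (n0 + 1 + k * N) T z0)) ->
  (forall i, (n0 <= i)%nat -> r (Nat.iter i T z0) (Nat.iter (S i) T z0) <= eta) ->
  (forall p q, P p q -> r p q < eps + delta -> r (T p) (T q) < eps) ->
  INR N * eta < delta ->
  forall k, r (Nat.iter n0 T z0) (Nat.iter (n0 + 1 + k * N) T z0) < eps + delta.
Proof.
  intros HN Heps Hjump Hstep Hbelow Heta.
  pose proof (dist_path_le _ _ Hr (fun n => Nat.iter n T z0) n0 eta Hstep) as Hpath.
  cbv beta in Hpath.
  assert (0 <= eta).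
  { pose proof (Hstep n0 (le_n _)).
    pose proof (dist_ge0 _ _ Hr (Nat.iter n0 T z0) (Nat.iter (S n0) T z0)). lra. }
  assert (eta <= INR N * eta).
  { rewrite <- (Rmult_1_l eta) at 1. apply Rmult_le_compat_r; [lra|].
    apply (le_INR 1); lia. }
  induction k as [|k IH].
  - rewrite Nat.mul_0_l, Nat.add_0_r. pose proof (Hpath 1%nat). simpl INR in *. lra.
  - set (m := (n0 + 1 + k * N)%nat) in *.
    replace (n0 + 1 + S k * N)%nat with (N + m)%nat by (unfold m; lia).
    assert (Hfar : r (Nat.iter (N + n0) T z0) (Nat.iter (N + m) T z0) < eps).
    { destruct N as [|N']; [lia|].
      rewrite !Nat.iter_add, !Nat.iter_succ_r.
      eapply Rle_lt_trans; [apply dist_iter_le, HPT, Hjump|].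
      apply Hbelow; [apply Hjump | exact IH]. }
    pose proof (dist_triangle _ _ Hr (Nat.iter n0 T z0) (Nat.iter (N + n0) T z0)
                  (Nat.iter (N + m) T z0)).
    pose proof (Hpath N). rewrite (Nat.add_comm n0 N) in *. lra.
Qed.

(* With [eps = e / 6] and [delta' = min delta eps], all points of the orbit
   after [n0] lie within [eps + 2 delta'] of [z n0]: the points
   [z (n0 + 1 + k N)] even within [eps + delta'], since they are [P]-related
   to [z n0]. *)
Lemma orbit_cauchy N z0 : (0 < N)%nat -> rel_N_transitive N P -> P z0 (T z0) ->
  cauchy r (fun n => Nat.iter n T z0).
Proof.
  intros HN Htr Hz0. set (z := fun n => Nat.iter n T z0).
  assert (Hsteps : forall n, P (z n) (z (S n))).
  { intros n; unfold z; rewrite Nat.iter_succ_r; apply iter_related, Hz0. }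
  intros e He. set (eps := e / 6).
  assert (Heps : 0 < eps) by (unfold eps; lra).
  destruct (meir_keeler_below eps Heps) as [delta [Hdelta Hbelow]].
  set (delta' := Rmin delta eps).
  assert (0 < delta') by (apply Rmin_glb_lt; lra).
  assert (delta' <= delta) by apply Rmin_l. assert (delta' <= eps) by apply Rmin_r.
  set (eta := delta' / (INR N + 1)).
  pose proof (pos_INR N).
  assert (0 < eta) by (apply Rdiv_lt_0_compat; lra).
  assert (INR N * eta + eta = delta') by (unfold eta; field; lra).
  destruct (orbits_asymptotic z0 (T z0) Hz0 eta) as [n0 Hn0]; [lra|].
  assert (Hstep : forall i, (n0 <= i)%nat -> r (z i) (z (S i)) <= eta).
  { intros i Hi; left; unfold z; rewrite Nat.iter_succ_r; exact (Hn0 i Hi). }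
  pose proof (orbit_jumps_near z0 N n0 eps delta' eta HN Heps
                (related_along_steps P N z Htr Hsteps n0) Hstep
                ltac:(intros p q Hpq Hpq'; apply Hbelow; [exact Hpq | lra])
                ltac:(lra)) as Hjumps.
  assert (Hnear : forall p, (n0 <= p)%nat -> r (z n0) (z p) < eps + 2 * delta').
  { intros p Hp. destruct (Nat.eq_dec p n0) as [->|Hne].
    - rewrite (dist_xx _ _ Hr). lra.
    - destruct (nat_split_mod n0 p N HN ltac:(lia)) as [q [j [Hj ->]]].
      pose proof (dist_triangle _ _ Hr (z n0) (z (n0 + 1 + q * N)%nat)
                    (z (n0 + 1 + q * N + j)%nat)).
      pose proof (Hjumps q).
      pose proof (dist_path_le _ _ Hr z (n0 + 1 + q * N) eta
                    ltac:(intros; apply Hstep; lia) j).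
      assert (INR j * eta <= INR N * eta)
        by (apply Rmult_le_compat_r; [lra | apply le_INR; lia]).
      unfold z in *; lra. }
  exists n0; intros m p Hm Hp.
  pose proof (Hnear m Hm). pose proof (Hnear p Hp).
  pose proof (dist_triangle _ _ Hr (z m) (z n0) (z p)).
  rewrite (dist_sym _ _ Hr (z m) (z n0)) in *. unfold eps in *. lra.
Qed.

Lemma limit_fixed_of_continuous z0 l :
  converges r (fun n => Nat.iter n T z0) l ->
  (forall eps, 0 < eps -> exists delta, 0 < delta /\
     forall p, r l p < delta -> r (T l) (T p) < eps) ->
  T l = l.
Proof.
  intros Hl Hcont. apply (converges_unique _ _ Hr (fun n => Nat.iter (S n) T z0)).
  - intros eps Heps. destruct (Hcont eps Heps) as [delta [Hdelta Hnear]].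
    destruct (Hl delta Hdelta) as [n0 Hn0]. exists n0; intros n Hn; simpl.
    rewrite (dist_sym _ _ Hr). apply Hnear. rewrite (dist_sym _ _ Hr). auto.
  - apply (converges_subseq _ _ _ _ S); [auto | exact Hl].
Qed.

Lemma limit_fixed_of_related_subseq z0 l (nk : nat -> nat) :
  converges r (fun n => Nat.iter n T z0) l -> (forall k, (nk k < nk (S k))%nat) ->
  (forall k, P (Nat.iter (nk k) T z0) l) -> T l = l.
Proof.
  intros Hl Hnk Hrel. pose proof (strictly_increasing_ge nk Hnk) as Hge.
  apply (converges_unique _ _ Hr (fun k => Nat.iter (S (nk k)) T z0)).
  - intros eps Heps. destruct (Hl eps Heps) as [n0 Hn0]. exists n0; intros k Hk; simpl.
    eapply Rle_lt_trans; [apply dist_map_le, Hrel|].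
    apply Hn0. specialize (Hge k); lia.
  - apply (converges_subseq _ _ _ _ (fun k => S (nk k))); [|exact Hl].
    intros k; specialize (Hge k); lia.
Qed.

Lemma fixed_point_attracts l p : T l = l -> clos_refl_sym_trans Z P l p ->
  converges r (fun n => Nat.iter n T p) l.
Proof.
  intros Hfix Hlp eps Heps.
  destruct (orbits_asymptotic_rst l p Hlp eps Heps) as [n0 Hn0].
  exists n0; intros n Hn. specialize (Hn0 n Hn); simpl in Hn0.
  rewrite (iter_fixed n l Hfix), (dist_sym _ _ Hr) in Hn0. exact Hn0.
Qed.

Lemma fixed_point_eq_of_converges l w : T w = w ->
  converges r (fun n => Nat.iter n T w) l -> w = l.
Proof.
  intros Hw Hl. apply (converges_unique _ _ Hr (fun _ => w));
    [exact (asymptotic_refl _ _ Hr (fun _ => w))|].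
  intros eps Heps. destruct (Hl eps Heps) as [n0 Hn0].
  exists n0; intros n Hn. rewrite <- (iter_fixed n w Hw). auto.
Qed.

End MeirKeeler.

Definition prod_dist {X : Type} (d : X -> X -> R) (p q : X * X) : R :=
  (d (fst p) (fst q) + d (snd p) (snd q)) / 2.

Definition coupled_map {X : Type} (F : X -> X -> X) (p : X * X) : X * X :=
  (F (fst p) (snd p), F (snd p) (fst p)).

(* [coupled_rel alpha p q] holds exactly when [beta p q >= 1], for the [beta]
   of (B5). *)
Definition coupled_rel {X : Type} (alpha : X * X -> X * X -> R) (p q : X * X) : Prop :=
  1 <= alpha p q /\ 1 <= alpha (snd q, fst q) (snd p, fst p).

Definition sequentially_regular {X : Type} (d : X -> X -> R)
    (alpha : X * X -> X * X -> R) : Prop :=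
  forall (xs ys : nat -> X) (x y : X),
    converges d xs x -> converges d ys y ->
    (forall n, 1 <= alpha (xs n, ys n) (xs (S n), ys (S n)) /\
               1 <= alpha (ys (S n), xs (S n)) (ys n, xs n)) ->
    exists nk : nat -> nat, (forall k, (nk k < nk (S k))%nat) /\
      forall k, 1 <= alpha (xs (nk k), ys (nk k)) (x, y) /\
                1 <= alpha (y, x) (ys (nk k), xs (nk k)).

Lemma iter_coupled_map {X : Type} (F : X -> X -> X) n x y :
  Nat.iter n (coupled_map F) (x, y) = (Fiter F n x y, Fiter F n y x).
Proof. induction n as [|n IH]; simpl; [reflexivity | rewrite IH; reflexivity]. Qed.

Lemma coupled_rel_preserved {X : Type} (alpha : X * X -> X * X -> R) (F : X -> X -> X) :
  (forall x y u v, 1 <= alpha (x, y) (u, v) -> 1 <= alpha (F x y, F y x) (F u v, F v u)) ->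
  forall p q, coupled_rel alpha p q -> coupled_rel alpha (coupled_map F p) (coupled_map F q).
Proof. intros HB1 [x y] [u v] [H1 H2]; split; apply HB1; assumption. Qed.

(* The chain for the swapped component is the original chain read backwards. *)
Lemma coupled_rel_N_transitive {X : Type} (alpha : X * X -> X * X -> R) N :
  N_transitive N alpha -> rel_N_transitive N (coupled_rel alpha).
Proof.
  intros Htrans z Hz. split.
  - apply Htrans; intros i Hi; apply Hz, Hi.
  - pose proof (Htrans (fun j => (snd (z (S N - j)%nat), fst (z (S N - j)%nat)))) as Hrev.
    cbv beta in Hrev; rewrite Nat.sub_0_r, Nat.sub_diag in Hrev.
    apply Hrev; intros i Hi.
    replace (S N - i)%nat with (S (N - i)) by lia.
    replace (S N - S i)%nat with (N - i)%nat by lia.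
    apply (Hz (N - i)%nat); lia.
Qed.

Lemma coupled_rel_connected {X : Type} (alpha : X * X -> X * X -> R) :
  gamma_connected
    (fun p q : X * X => Rmin (alpha p q) (alpha (snd q, fst q) (snd p, fst p))) ->
  forall p q, clos_refl_sym_trans (X * X) (coupled_rel alpha) p q.
Proof.
  intros Hconn p q. destruct (classic (p = q)) as [<-|Hne]; [apply rst_refl|].
  destruct (Hconn p q Hne) as [n [c [Hc0 [Hcn Hlinks]]]]. subst p q.
  assert (Hrel : forall a b, 1 <= Rmin (alpha a b) (alpha (snd b, fst b) (snd a, fst a)) ->
            coupled_rel alpha a b).
  { intros a b Hab; split; eapply Rle_trans;
      [exact Hab | apply Rmin_l | exact Hab | apply Rmin_r]. }
  clear Hne; revert Hlinks; induction n as [|n IH]; intros Hlinks; [apply rst_refl|].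
  apply rst_trans with (c n); [apply IH; intros i Hi; apply Hlinks; lia|].
  destruct (Hlinks n ltac:(lia)) as [H|H]; [apply rst_step | apply rst_sym, rst_step];
    apply Hrel, H.
Qed.

Section ProductMetric.

Variables (X : Type) (d : X -> X -> R).
Hypothesis Hd : is_metric d.

Lemma prod_dist_metric : is_metric (prod_dist d).
Proof.
  destruct Hd as [H0 [H1 [Hs Ht]]]. unfold prod_dist. repeat split.
  - intros; pose proof (H0 (fst x) (fst y)); pose proof (H0 (snd x) (snd y)); lra.
  - intros Hz. pose proof (H0 (fst x) (fst y)); pose proof (H0 (snd x) (snd y)).
    destruct x, y; simpl in *. f_equal; apply H1; lra.
  - intros ->. rewrite (proj2 (H1 _ _) eq_refl), (proj2 (H1 (snd y) _) eq_refl). lra.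
  - intros; rewrite (Hs (fst x)), (Hs (snd x)); reflexivity.
  - intros. pose proof (Ht (fst x) (fst y) (fst z)).
    pose proof (Ht (snd x) (snd y) (snd z)); lra.
Qed.

Lemma converges_components s l : converges (prod_dist d) s l ->
  converges d (fun n => fst (s n)) (fst l) /\ converges d (fun n => snd (s n)) (snd l).
Proof.
  intros Hl. split; intros eps Heps; destruct (Hl (eps / 2)) as [n0 Hn0]; try lra;
    exists n0; intros n Hn; specialize (Hn0 n Hn); unfold prod_dist in Hn0;
    pose proof (dist_ge0 _ _ Hd (fst (s n)) (fst l));
    pose proof (dist_ge0 _ _ Hd (snd (s n)) (snd l)); lra.
Qed.

Lemma converges_Fiter (F : X -> X -> X) x y l :
  converges (prod_dist d) (fun n => Nat.iter n (coupled_map F) (x, y)) l ->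
  converges d (fun n => Fiter F n x y) (fst l).
Proof.
  intros Hl. destruct (converges_components _ l Hl) as [Hfst _].
  intros eps Heps; destruct (Hfst eps Heps) as [n0 Hn0]; exists n0; intros n Hn.
  specialize (Hn0 n Hn); rewrite iter_coupled_map in Hn0; exact Hn0.
Qed.

Lemma prod_dist_complete : complete d -> complete (prod_dist d).
Proof.
  intros Hcomp s Hs.
  assert (Hcomponent : forall f : X * X -> X,
            (forall p q, d (f p) (f q) <= 2 * prod_dist d p q) ->
            exists a, converges d (fun n => f (s n)) a).
  { intros f Hf. apply Hcomp. intros eps Heps.
    destruct (Hs (eps / 2)) as [n0 Hn0]; [lra|].
    exists n0; intros m n Hm Hn. specialize (Hn0 m n Hm Hn).
    specialize (Hf (s m) (s n)); lra. }
  destruct (Hcomponent fst) as [x Hx].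
  { intros p q; unfold prod_dist; pose proof (dist_ge0 _ _ Hd (snd p) (snd q)); lra. }
  destruct (Hcomponent snd) as [y Hy].
  { intros p q; unfold prod_dist; pose proof (dist_ge0 _ _ Hd (fst p) (fst q)); lra. }
  exists (x, y). intros eps Heps.
  destruct (Hx eps Heps) as [n1 Hn1]. destruct (Hy eps Heps) as [n2 Hn2].
  exists (n1 + n2)%nat. intros n Hn.
  specialize (Hn1 n ltac:(lia)). specialize (Hn2 n ltac:(lia)).
  unfold prod_dist; simpl. lra.
Qed.

Lemma coupled_map_continuous (F : X -> X -> X) : continuous2 d F ->
  forall l eps, 0 < eps -> exists delta, 0 < delta /\
    forall p, prod_dist d l p < delta ->
      prod_dist d (coupled_map F l) (coupled_map F p) < eps.
Proof.
  intros Hcont [a b] eps Heps.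
  destruct (Hcont a b eps Heps) as [delta1 [Hdelta1 Hnear1]].
  destruct (Hcont b a eps Heps) as [delta2 [Hdelta2 Hnear2]].
  exists (Rmin delta1 delta2 / 2). split.
  { apply Rdiv_lt_0_compat; [apply Rmin_glb_lt|]; lra. }
  intros [u v] Hp. unfold prod_dist, coupled_map in *; simpl in *.
  pose proof (Rmin_l delta1 delta2). pose proof (Rmin_r delta1 delta2).
  assert (d (F a b) (F u v) < eps) by (apply Hnear1; lra).
  assert (d (F b a) (F v u) < eps) by (apply Hnear2; lra).
  lra.
Qed.

Lemma coupled_map_meir_keeler (alpha : X * X -> X * X -> R) (F : X -> X -> X) :
  (forall eps, 0 < eps -> exists delta, 0 < delta /\
     forall x y u v, eps <= (d x u + d y v) / 2 < eps + delta ->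
       alpha (x, y) (u, v) * d (F x y) (F u v) < eps) ->
  meir_keeler_on (prod_dist d) (coupled_map F) (coupled_rel alpha).
Proof.
  intros Hcontr eps Heps. destruct (Hcontr eps Heps) as [delta [Hdelta Hstep]].
  exists delta; split; [exact Hdelta|].
  intros [x y] [u v] [H1 H2] Hrange. unfold prod_dist, coupled_map in *; simpl in *.
  pose proof (Hstep x y u v Hrange).
  pose proof (Hstep v u y x ltac:(rewrite (dist_sym _ _ Hd v), (dist_sym _ _ Hd u); lra)).
  pose proof (dist_ge0 _ _ Hd (F x y) (F u v)).
  pose proof (dist_ge0 _ _ Hd (F v u) (F y x)).
  rewrite (dist_sym _ _ Hd (F y x)). nra.
Qed.

Lemma coupled_limit_fixed_of_regular (alpha : X * X -> X * X -> R) (F : X -> X -> X) z0 l :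
  sequentially_regular d alpha ->
  meir_keeler_on (prod_dist d) (coupled_map F) (coupled_rel alpha) ->
  (forall n, coupled_rel alpha (Nat.iter n (coupled_map F) z0)
                               (Nat.iter (S n) (coupled_map F) z0)) ->
  converges (prod_dist d) (fun n => Nat.iter n (coupled_map F) z0) l ->
  coupled_map F l = l.
Proof.
  intros Hreg Hmk Hsteps Hl.
  destruct (converges_components _ l Hl) as [Hxs Hys].
  destruct (Hreg _ _ _ _ Hxs Hys) as [nk [Hnk Hrel]].
  - intros n. rewrite <- !surjective_pairing. apply Hsteps.
  - apply (limit_fixed_of_related_subseq _ _ _ _ prod_dist_metric Hmk z0 l nk Hl Hnk).
    intros k. destruct (Hrel k) as [H1 H2]. split; [|exact H2].
    rewrite <- !surjective_pairing in H1. exact H1.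
Qed.

End ProductMetric.

Theorem corollary3 (X : Type) (d : X -> X -> R) (N : nat)
  (alpha : X * X -> X * X -> R) (F : X -> X -> X)
  (Hd : is_metric d) (Hcomp : complete d)
  (HN : (0 < N)%nat)
  (Halpha_nonneg : forall p q, 0 <= alpha p q)
  (Htrans : N_transitive N alpha)
  (Hcontr : forall eps, 0 < eps -> exists delta, 0 < delta /\
     forall x y u v,
       eps <= (d x u + d y v) / 2 < eps + delta ->
       alpha (x, y) (u, v) * d (F x y) (F u v) < eps)
  (HB1 : forall x y u v, 1 <= alpha (x, y) (u, v) ->
       1 <= alpha (F x y, F y x) (F u v, F v u))
  (HB2 : exists x0 y0, 1 <= alpha (x0, y0) (F x0 y0, F y0 x0) /\
       1 <= alpha (F y0 x0, F x0 y0) (y0, x0))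
  (HB34 : continuous2 d F \/
     (forall (xs ys : nat -> X) (x y : X),
        converges d xs x -> converges d ys y ->
        (forall n, 1 <= alpha (xs n, ys n) (xs (S n), ys (S n)) /\
                   1 <= alpha (ys (S n), xs (S n)) (ys n, xs n)) ->
        exists nk : nat -> nat, (forall k, (nk k < nk (S k))%nat) /\
          forall k, 1 <= alpha (xs (nk k), ys (nk k)) (x, y) /\
                    1 <= alpha (y, x) (ys (nk k), xs (nk k))))
  (HB5 : gamma_connected
     (fun p q : X * X => Rmin (alpha p q) (alpha (snd q, fst q) (snd p, fst p)))) :
  exists xstar : X,
    (forall x y, (F x y = x /\ F y x = y) <-> (x = xstar /\ y = xstar)) /\
    F xstar xstar = xstar /\
    (forall x, F x x = x -> x = xstar) /\
    (forall x y, converges d (fun n => Fiter F n x y) xstar).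
Proof.
  set (T := coupled_map F).
  pose proof (prod_dist_metric X d Hd) as Hrho.
  pose proof (coupled_rel_preserved alpha F HB1) as HPT.
  pose proof (coupled_map_meir_keeler X d Hd alpha F Hcontr) as Hmk.
  destruct HB2 as [x0 [y0 HP0]].
  pose proof (orbit_cauchy _ _ T _ Hrho HPT Hmk N (x0, y0) HN
                (coupled_rel_N_transitive alpha N Htrans) HP0) as Hcauchy.
  destruct (prod_dist_complete X d Hd Hcomp _ Hcauchy) as [l Hl].
  assert (Hfix : T l = l).
  { destruct HB34 as [Hcont | Hreg].
    - exact (limit_fixed_of_continuous _ _ T Hrho (x0, y0) l Hl
               (coupled_map_continuous X d F Hcont l)).
    - apply (coupled_limit_fixed_of_regular X d Hd alpha F (x0, y0) l Hreg Hmk); [|exact Hl].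
      intros n; rewrite Nat.iter_succ_r; apply iter_related; assumption. }
  assert (Hattr : forall p, converges (prod_dist d) (fun n => Nat.iter n T p) l).
  { intros p; apply (fixed_point_attracts _ _ T _ Hrho HPT Hmk l p Hfix).
    apply coupled_rel_connected, HB5. }
  assert (Huniq : forall x y, F x y = x -> F y x = y -> (x, y) = l).
  { intros x y Hx Hy. apply (fixed_point_eq_of_converges _ _ T Hrho); [|apply Hattr].
    unfold T, coupled_map; simpl; rewrite Hx, Hy; reflexivity. }
  destruct l as [a b]. injection Hfix as Ha Hb.
  injection (Huniq b a Hb Ha) as -> _.
  exists a; split; [|split; [|split]].
  - intros x y; split; [intros [Hx Hy]; injection (Huniq x y Hx Hy); tauto|].
    intros [-> ->]; tauto.
  - exact Ha.
  - intros x Hx; injection (Huniq x x Hx Hx); tauto.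
  - intros x y. exact (converges_Fiter X d Hd F x y (a, a) (Hattr (x, y))).
Qed.
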